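(* Let $A(x)$ and $B(x)\neq 0$ be rational functions with real coefficients. Suppose all solutions of the ordinary differential equation $$f(x)A(x)+f'(x)B(x)=1$$ are algebraic functions. Then the general solution of this equation can be written as $$f(x)=r(x)+\sigma q^{1/N}(x),\qquad \sigma\in\mathbb{R},$$ where $N\in\mathbb{N}$ and $r(x),q(x)$ are rational functions (independent of $\sigma$). *)

From HB Require Import structures.
From mathcomp Require Import all_boot all_order all_algebra.
From mathcomp Require Import all_classical all_reals topology normedtype derive.
Set Implicit Arguments. Unset Strict Implicit. Unset Printing Implicit Defensive.
Import Order.TTheory GRing.Theory Num.Theory.
Import numFieldNormedType.Exports.
Local Open Scope ring_scope.

(* A real rational function is represented as a pair (numerator, denominator)
   of real polynomials; [ratev] evaluates it (denominator assumed nonzero). *)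
Definition ratev (R : realType) (p q : {poly R}) (x : R) : R := p.[x] / q.[x].

(* An admissible interval for the ODE  f A + f' B = 1  with A = a1/a2,
   B = b1/b2: a nonempty open interval ]u,v[ on which a2, b1, b2 do not vanish
   (so A, B are defined and the equation is regular there). *)
Definition admissible (R : realType) (a2 b1 b2 : {poly R}) (u v : R) : Prop :=
  u < v /\ forall x, u < x < v -> [/\ a2.[x] != 0, b1.[x] != 0 & b2.[x] != 0].

Definition is_solution (R : realType) (a1 a2 b1 b2 : {poly R}) (u v : R)
    (f : R -> R) : Prop :=
  forall x, u < x < v ->
    derivable f x 1 /\ f x * ratev a1 a2 x + derive1 f x * ratev b1 b2 x = 1.

Definition algebraic_on (R : realType) (u v : R) (f : R -> R) : Prop :=
  exists P : {poly {poly R}}, P != 0 /\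
    forall x, u < x < v -> \sum_(i < size P) (P`_i).[x] * f x ^+ i = 0.

(* Multiplied by a2 b2, the equation reads be f' = ga - al f with be = a2 b1,
   al = a1 b2 and ga = a2 b2.  Let P(x, y) be an annihilator of a solution f of
   minimal degree n in y.  Differentiating P(x, f(x)) along the equation gives
   another annihilator of degree at most n, which must be proportional to P;
   comparing the coefficients of y^(n-1) shows that minus the mean of the roots
   of P, r = - P_(n-1) / (n P_n) = r1 / r2, is a rational solution.  The deviation
   h = r2 (f - r) solves a homogeneous linear equation and is algebraic too; near
   a point where h does not vanish its minimal annihilator has P(x, 0) <> 0, and
   comparing constant coefficients shows that q = P_0 / P_n solves that
   homogeneous equation multiplied by n.  Hence h^n = C q for every solution,
   with the same n and q, so f = r + sigma g where g^(2n) = (q / r2^n)^2 (the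
   square removes the sign of C). *)

From HB Require Import structures.
From mathcomp Require Import all_boot all_order all_algebra.
From mathcomp Require Import all_classical all_reals topology normedtype derive.
From mathcomp Require Import realfun exp.
From mathcomp Require Import ring lra.
Import Order.TTheory GRing.Theory Num.Theory.
Import numFieldNormedType.Exports.
Local Open Scope ring_scope.
Set Implicit Arguments. Unset Strict Implicit. Unset Printing Implicit Defensive.

Lemma poly_eq0_itv (R : realFieldType) (p : {poly R}) (u v : R) : u < v ->
  (forall x, u < x < v -> p.[x] = 0) -> p = 0.
Proof.
move=> uv p0; pose pt i : R := u + (v - u) / i.+2%:R.
apply: (@roots_geq_poly_eq0 _ p [seq pt i | i <- iota 0 (size p)]).
- apply/allP => _ /mapP [i _ ->]; apply/eqP/p0.
  have i2 : 1 < i.+2%:R :> R by rewrite ltr1n.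
  have t0 : 0 < (v - u) / i.+2%:R by rewrite divr_gt0 ?subr_gt0 ?ltr0n.
  have tv : (v - u) / i.+2%:R < v - u.
    by rewrite ltr_pdivrMr ?ltr0n // ltr_pMr ?subr_gt0.
  by rewrite /pt; move: t0 tv; set t := _ / _ => t0 tv; apply/andP; split; lra.
- rewrite map_inj_uniq ?iota_uniq // => i j /addrI /mulfI.
  rewrite subr_eq0 gt_eqF // => /(_ isT) /invr_inj /eqP.
  by rewrite eqr_nat => /eqP [].
- by rewrite size_map size_iota.
Qed.

Section RationalResidual.
Variable R : numFieldType.
Implicit Types (p a b c e be : {poly R}) (x : R).

(* In characteristic 0, a root of multiplicity m of p has multiplicity exactly
   m - 1 in p^`(). *)
Lemma dvdp_mul_deriv_root p b x : p != 0 -> root p x -> p %| b * p^`() -> root b x.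
Proof.
move=> p0 px; have [m [q qx ep]] := multiplicity_XsubC p x.
rewrite p0 /= in qx; case: m ep => [|m] ep; first by rewrite ep expr0 mulr1 (negbTE qx) in px.
set X := 'X - x%:P in ep.
have -> : b * p^`() = b * (q^`() * X + q *+ m.+1) * X ^+ m.
  by rewrite ep derivM deriv_exp derivXsubC /= -/X exprS; ring.
have -> : p = q * X * X ^+ m by rewrite ep exprS; ring.
rewrite dvdp_mul2r ?expf_neq0 ?polyXsubC_eq0 // => /(dvdp_trans (dvdp_mull q (dvdpp X))).
rewrite dvdp_XsubCl rootM /root !hornerE subrr mulr0 add0r hornerMn mulrn_eq0 /=.
by rewrite -/(root q x) (negbTE qx) orbF.
Qed.

(* b^2 * (be * (a/b)^`() + c * (a/b) + e): the linear equation be y' + c y + e = 0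
   evaluated at y = a/b, with denominators cleared. *)
Definition ode_residual be c e a b :=
  be * (a^`() * b - a * b^`()) + c * a * b + e * b ^+ 2.

Lemma ode_residualM be c e a b g :
  ode_residual be c e (a * g) (b * g) = g ^+ 2 * ode_residual be c e a b.
Proof. by rewrite /ode_residual !derivM; ring. Qed.

Lemma ode_residual_coprime be c e a b : b != 0 -> ode_residual be c e a b = 0 ->
  exists a' b', [/\ coprimep a' b', b' != 0, (a != 0 -> a' != 0) &
                    ode_residual be c e a' b' = 0].
Proof.
move=> b0 res0; set g := gcdp a b.
have g0 : g != 0 by rewrite gcdp_eq0 negb_and b0 orbT.
have ea : a = a %/ g * g by rewrite divpK // dvdp_gcdl.
have eb : b = b %/ g * g by rewrite divpK // dvdp_gcdr.
exists (a %/ g), (b %/ g); split.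
- by apply: coprimep_div_gcd; rewrite b0 orbT.
- by apply: contra b0 => /eqP b'0; rewrite eb b'0 mul0r.
- by move=> a0; apply: contra a0 => /eqP a'0; rewrite ea a'0 mul0r.
- apply/eqP; move: res0; rewrite {1}ea {1}eb ode_residualM => /eqP.
  by rewrite mulf_eq0 expf_eq0 (negbTE g0) andbF.
Qed.

Lemma ode_residual_pole be c e a b x : coprimep a b -> b != 0 ->
  ode_residual be c e a b = 0 -> root b x -> root be x.
Proof.
move=> ab b0 res0 bx.
have : b %| be * a * b^`().
  have -> : be * a * b^`() = b * (be * a^`() + c * a + e * b).
    by apply/eqP; rewrite -subr_eq0 -oppr_eq0 -res0 /ode_residual; apply/eqP; ring.
  exact: dvdp_mulIl.
move=> /(dvdp_mul_deriv_root b0 bx); rewrite rootM => /orP[//|ax].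
by move/rootP: ax (coprimep_root (etrans (coprimep_sym b a) ab) bx) => ->; rewrite eqxx.
Qed.

Lemma ode_residual_root be c a b x : coprimep a b -> a != 0 ->
  ode_residual be c 0 a b = 0 -> root a x -> root be x.
Proof.
move=> ab a0 res0 ax.
have : a %| be * b * a^`().
  have -> : be * b * a^`() = a * (be * b^`() - c * b).
    by apply/eqP; rewrite -subr_eq0 -res0 /ode_residual; apply/eqP; ring.
  exact: dvdp_mulIl.
move=> /(dvdp_mul_deriv_root a0 ax); rewrite rootM => /orP[//|bx].
by move/rootP: bx (coprimep_root ab ax) => ->; rewrite eqxx.
Qed.

End RationalResidual.

Section Bivariate.
Variable R : comNzRingType.
Implicit Types (P Q : {poly {poly R}}) (c : {poly R}) (x y : R).

Definition horner2 P x y : R := (map_poly (horner_eval x) P).[y].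

Definition pderivx P : {poly {poly R}} := map_poly deriv P.

Lemma horner2D P Q x y : horner2 (P + Q) x y = horner2 P x y + horner2 Q x y.
Proof. by rewrite /horner2 rmorphD hornerD. Qed.

Lemma horner2B P Q x y : horner2 (P - Q) x y = horner2 P x y - horner2 Q x y.
Proof. by rewrite /horner2 rmorphB hornerD hornerN. Qed.

Lemma horner2M P Q x y : horner2 (P * Q) x y = horner2 P x y * horner2 Q x y.
Proof. by rewrite /horner2 rmorphM hornerM. Qed.

Lemma horner2C c x y : horner2 c%:P x y = c.[x].
Proof. by rewrite /horner2 map_polyC hornerC. Qed.

Lemma horner2X x y : horner2 'X x y = y.
Proof. by rewrite /horner2 map_polyX hornerX. Qed.

Lemma horner20 x y : horner2 0 x y = 0.
Proof. by rewrite /horner2 map_poly0 horner0. Qed.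

Definition horner2E := (horner2D, horner2B, horner2M, horner2C, horner2X, horner20).

Lemma horner2_sum P x y : horner2 P x y = \sum_(i < size P) (P`_i).[x] * y ^+ i.
Proof.
rewrite /horner2 (@horner_coef_wide _ (size P)) ?size_poly //.
by apply: eq_bigr => i _; rewrite coef_map_id0 // horner_evalE horner0.
Qed.

Lemma horner2_shift P r x y : horner2 (P \Po ('X + r%:P)) x y = horner2 P x (y + r.[x]).
Proof.
by rewrite /horner2 map_comp_poly horner_comp rmorphD /= map_polyX map_polyC !hornerE.
Qed.

Lemma pderivx_MXaddC P c : pderivx (P * 'X + c%:P) = pderivx P * 'X + (c^`())%:P.
Proof.
apply/polyP => i; rewrite /pderivx coefD coef_map_id0 ?deriv0 // coefD !coefMX !coefC.
by case: i => [|i] /=; rewrite ?add0r // !addr0 coef_map_id0 ?deriv0.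
Qed.

End Bivariate.

Lemma algebraic_onE (R : realType) (u v : R) (f : R -> R) : algebraic_on u v f <->
  exists2 P, P != 0 & forall x, u < x < v -> horner2 P x (f x) = 0.
Proof.
split=> [[P [P0 fP]]|[P P0 fP]]; exists P => //.
- by move=> x ux; rewrite horner2_sum fP.
- by split=> // x ux; rewrite -horner2_sum fP.
Qed.

Lemma algebraic_on_affine (R : realType) (u v : R) (f : R -> R) (s r : {poly R}) :
  algebraic_on u v f -> algebraic_on u v (fun x => s.[x] * f x - r.[x]).
Proof.
move=> /algebraic_onE [P P0 fP]; apply/algebraic_onE.
set n := (size P).-1; pose P2 := \poly_(i < size P) (P`_i * s ^+ (n - i)).
have P2s x y : horner2 P2 x (s.[x] * y) = s.[x] ^+ n * horner2 P x y.
  rewrite [horner2 P x y]horner2_sum /horner2 (@horner_coef_wide _ (size P)); last first.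
    by rewrite (leq_trans (size_poly _ _)) ?size_poly.
  rewrite mulr_sumr; apply: eq_bigr => i _.
  rewrite coef_map_id0 ?horner_evalE ?horner0 // coef_poly ltn_ord hornerM horner_exp.
  have -> : s.[x] ^+ n = s.[x] ^+ (n - i) * s.[x] ^+ i.
    by rewrite -exprD subnK // -ltnS prednK ?size_poly_gt0.
  by rewrite exprMn; ring.
have P20 : P2 != 0.
  apply/eqP => /(congr1 (fun Q : {poly {poly R}} => Q`_n)).
  rewrite coef_poly coef0 /n prednK ?size_poly_gt0 // leqnn subnn expr0 mulr1 => Pn.
  by move: P0; rewrite -lead_coef_eq0 lead_coefE Pn eqxx.
exists (P2 \Po ('X + r%:P)); first by rewrite comp_poly2_eq0 ?size_XaddC.
by move=> x ux; rewrite horner2_shift subrK P2s fP ?mulr0.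
Qed.

Lemma algebraic_on_sub (R : realType) (u v u' v' : R) (f : R -> R) :
  (forall x, u' < x < v' -> u < x < v) -> algebraic_on u v f -> algebraic_on u' v' f.
Proof. by move=> sub [P [P0 fP]]; exists P; split=> // x /sub; apply: fP. Qed.

Lemma ex_size_minimal (K : nzSemiRingType) (S : {poly K} -> Prop) :
  (exists2 P, P != 0 & S P) ->
  exists P, [/\ P != 0, S P & forall Q, S Q -> (size Q < size P)%N -> Q = 0].
Proof.
move=> [P]; have [n] := ubnP (size P); elim: n P => // n IH P szP P0 SP.
have [[Q /andP[Q0 szQ] SQ]|noQ] :=
  pselect (exists2 Q : {poly K}, (Q != 0) && (size Q < size P)%N & S Q).
  by apply: (IH Q) => //; apply: leq_trans szQ _; rewrite -ltnS.
exists P; split=> // Q SQ szQ; have [//|Q0] := eqVneq Q 0.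
by case: noQ; exists Q; rewrite ?Q0.
Qed.

Section OdeDerivation.
Variable R : numFieldType.
Variables be c0 c1 : {poly R}.
Implicit Type P : {poly {poly R}}.

(* be times the total derivative of P(x, y) along the equation be y' = c0 + c1 y *)
Definition ode_deriv P := be%:P * pderivx P + (c0%:P + c1%:P * 'X) * P^`().

Definition ode_deriv_red P :=
  (lead_coef P)%:P * ode_deriv P - ((ode_deriv P)`_(size P).-1)%:P * P.

Lemma coef_ode_deriv P k : (ode_deriv P)`_k =
  be * (P`_k)^`() + c0 * (P`_k.+1 *+ k.+1) + c1 * (P`_k *+ k).
Proof.
rewrite /ode_deriv mulrDl -mulrA ['X * _]mulrC !coefD !coefCM coefMX.
rewrite coef_map_id0 ?deriv0 // !coef_deriv addrA.
by case: k => [|k] //=; rewrite mulr0n.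
Qed.

Lemma size_ode_deriv P : (size (ode_deriv P) <= size P)%N.
Proof.
apply/leq_sizeP => k kP; rewrite coef_ode_deriv !nth_default ?deriv0 ?(leqW kP) //.
by rewrite !mul0rn !mulr0 !addr0.
Qed.

Lemma size_ode_deriv_red P : P != 0 -> (size (ode_deriv_red P) < size P)%N.
Proof.
move=> P0; have szP := polySpred P0; rewrite szP ltnS; apply/leq_sizeP => k.
rewrite leq_eqVlt coefB !coefCM => /orP[/eqP<-|nk].
  by rewrite lead_coefE mulrC subrr.
have kP : (size P <= k)%N by rewrite szP.
rewrite [P`_k]nth_default // [(ode_deriv P)`_k]nth_default ?(leq_trans (size_ode_deriv P)) //.
by rewrite !mulr0 subrr.
Qed.

(* - P_m / ((m+1) P_(m+1)) is minus the mean of the roots in y of P. *)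
Lemma ode_residual_red_top P m : size P = m.+2 ->
  ode_residual be (- c1) (- c0) (- P`_m) (P`_m.+1 *+ m.+1) =
  - ((ode_deriv_red P)`_m *+ m.+1).
Proof.
move=> szP; rewrite /ode_deriv_red coefB !coefCM !coef_ode_deriv szP /= lead_coefE szP /=.
rewrite [P`_m.+2]nth_default ?szP // /ode_residual derivN derivMn; ring.
Qed.

Lemma ode_residual_red_bottom P n : size P = n.+1 -> c0 = 0 ->
  ode_residual be (- (c1 *+ n)) 0 P`_0 P`_n = (ode_deriv_red P)`_0.
Proof.
move=> szP c00; rewrite /ode_deriv_red coefB !coefCM !coef_ode_deriv szP /= lead_coefE szP /=.
by rewrite c00 /ode_residual; ring.
Qed.

End OdeDerivation.

Section Derivatives.
Variable R : realType.
Implicit Types (u v x : R) (F : R -> R).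

Lemma horner2_is_derive (P : {poly {poly R}}) (phi : R -> R) dphi x :
  is_derive x (1:R) phi dphi ->
  is_derive x (1:R) (fun t => horner2 P t (phi t))
    (horner2 (pderivx P) x (phi x) + horner2 P^`() x (phi x) * dphi).
Proof.
move=> phi'; elim/poly_ind: P => [|Q c IH].
  rewrite /pderivx map_poly0 deriv0 !horner20 mul0r addr0.
  have -> : (fun t => horner2 0 t (phi t)) = cst 0 by apply/funext => t; rewrite horner20.
  exact: is_derive_cst.
have -> : (fun t => horner2 (Q * 'X + c%:P) t (phi t)) =
    (fun t => horner2 Q t (phi t)) * phi + horner c.
  by apply/funext => t; rewrite !horner2E.
apply: is_derive_eq.
by rewrite pderivx_MXaddC derivMXaddC !horner2E /GRing.scale /=; ring.
Qed.

Lemma is_derive0_itv_cst u v F : (forall x, u < x < v -> is_derive x (1:R) F 0) ->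
  forall x y, u < x < v -> u < y < v -> F x = F y.
Proof.
move=> F'0 x y; wlog xy : x y / x <= y.
  by move=> H ux uy; case: (leP x y) => [/H|/ltW /H]; [apply|move=> /(_ uy ux)].
move=> /andP[ux xv] /andP[uy yv].
have [||c _] := @MVT_segment R F (fun _ => 0) x y xy.
- move=> z; rewrite in_itv /= => /andP[xz zy]; apply: F'0.
  by rewrite (lt_trans ux xz) (lt_trans zy yv).
- apply: derivable_within_continuous => z; rewrite in_itv /= => /andP[xz zy].
  have : u < z < v by rewrite (lt_le_trans ux xz) (le_lt_trans zy yv).
  by move/F'0 => [].
by rewrite mul0r => /eqP; rewrite subr_eq0 => /eqP.
Qed.

Lemma near_itv u v x : u < x < v -> \forall t \near x, u < t < v.
Proof.
move=> ux; have := @near_in_itvoo R u v x; rewrite in_itv /= => /(_ ux).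
by apply: filterS => t; rewrite in_itv.
Qed.

Lemma derivable1_continuous F x : derivable F x 1 -> {for x, continuous F}.
Proof. by move=> F'; apply/differentiable_continuous/derivable1_diffP. Qed.

End Derivatives.

Section Annihilator.
Variable R : realType.
Variables (u v : R) (phi dphi : R -> R) (be c0 c1 : {poly R}).
Hypothesis phi_derive : forall x, u < x < v -> is_derive x (1:R) phi (dphi x).
Hypothesis phi_ode : forall x, u < x < v -> be.[x] * dphi x = c0.[x] + c1.[x] * phi x.
Implicit Type P : {poly {poly R}}.

Definition annihilates P := forall x, u < x < v -> horner2 P x (phi x) = 0.

Lemma annihilates_ode_deriv P : annihilates P -> annihilates (ode_deriv be c0 c1 P).
Proof.
move=> Pphi x ux.
have := horner2_is_derive P (phi_derive ux).
set D := _ + _ => P'.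
have D' : is_derive x (1:R) (cst (0:R)) D.
  apply: near_eq_is_derive P'; apply: filterS (near_itv ux) => t ut.
  by rewrite Pphi.
have D0 : D = 0 by rewrite -(@derive_val _ _ _ _ _ _ _ D') derive_cst.
rewrite /ode_deriv !horner2E -phi_ode // -mulrA [dphi x * _]mulrC -mulrDr.
by rewrite -/D D0 mulr0.
Qed.

Lemma annihilates_ode_deriv_red P : annihilates P -> annihilates (ode_deriv_red be c0 c1 P).
Proof.
move=> Pphi x ux; rewrite /ode_deriv_red horner2B !horner2M Pphi //.
by rewrite annihilates_ode_deriv // !mulr0 subr0.
Qed.

Lemma annihilator_size_gt1 P : u < v -> P != 0 -> annihilates P -> (1 < size P)%N.
Proof.
move=> uv P0 Pphi; rewrite ltnNge; apply: contra P0 => /size1_polyC eP.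
rewrite eP polyC_eq0; apply/eqP; apply: (poly_eq0_itv uv) => x ux.
by have := Pphi x ux; rewrite {1}eP horner2C.
Qed.

Section Minimal.
Variable P : {poly {poly R}}.
Hypotheses (P0 : P != 0) (Pphi : annihilates P).
Hypothesis Pmin : forall Q, annihilates Q -> (size Q < size P)%N -> Q = 0.

Lemma minimal_ode_deriv_red : ode_deriv_red be c0 c1 P = 0.
Proof. exact: Pmin (annihilates_ode_deriv_red Pphi) (size_ode_deriv_red _ _ _ P0). Qed.

Lemma minimal_coef0_neq0 : (forall x, u < x < v -> phi x != 0) -> P`_0 != 0.
Proof.
move=> phi0; apply: contra P0 => /eqP P00.
have eP : P = drop_poly 1 P * 'X.
  by apply/polyP => -[|i]; rewrite coefMX coef_drop_poly ?addn1.
rewrite eP; suff -> : drop_poly 1 P = 0 by rewrite mul0r.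
apply: Pmin; last by rewrite size_drop_poly subn1 prednK // size_poly_gt0.
move=> x ux; apply/eqP; rewrite -(mulIr_eq0 _ (mulIf (phi0 x ux))).
by rewrite -[X in _ * X](horner2X x (phi x)) -horner2M -eP Pphi.
Qed.

End Minimal.

End Annihilator.

Section PowerRatio.
Variable R : realType.
Implicit Types (u v x : R) (p q : {poly R}).

Lemma ratev_continuous p q x : q.[x] != 0 -> {for x, continuous (ratev p q)}.
Proof.
move=> qx; apply: derivable1_continuous.
have -> : ratev p q = horner p * (fun t => (q.[t])^-1) by apply/funext => t.
by apply: derivableM; [|apply: derivableV]; rewrite ?derivable_horner.
Qed.

(* y^(k+1) and q1/q2 both solve B z' = (k+1) c z, so their ratio is constant. *)
Lemma ode_power_ratio_cst u v (y dy : R -> R) (B c q1 q2 : {poly R}) k :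
  u < v ->
  (forall x, u < x < v -> is_derive x (1:R) y (dy x)) ->
  (forall x, u < x < v -> B.[x] * dy x = c.[x] * y x) ->
  ode_residual B (- (c *+ k.+1)) 0 q1 q2 = 0 ->
  (forall x, u < x < v -> [/\ B.[x] != 0, q1.[x] != 0 & q2.[x] != 0]) ->
  exists C, forall x, u < x < v -> y x ^+ k.+1 = C * q1.[x] / q2.[x].
Proof.
move=> uv y' y_ode q_sol nz.
pose Phi := y ^+ k.+1 * horner q2 * (fun t => (q1.[t])^-1).
have Phi'0 x : u < x < v -> is_derive x (1:R) Phi 0.
  move=> ux; have [Bx q1x q2x] := nz x ux.
  apply: (is_derive_eq (is_deriveM (is_deriveM (is_deriveX k.+1 (y' x ux))
    (is_derive_poly q2 x)) (is_deriveV q1x (is_derive_poly q1 x)))).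
  apply: (mulfI (mulf_neq0 Bx (expf_neq0 2 q1x))).
  have res : (ode_residual B (- (c *+ k.+1)) 0 q1 q2).[x] = 0 by rewrite q_sol horner0.
  rewrite /GRing.scale /= !fctE.
  transitivity (y x ^+ k * q1.[x] * q2.[x] * k.+1%:R * (B.[x] * dy x - c.[x] * y x)
                - y x ^+ k.+1 * (ode_residual B (- (c *+ k.+1)) 0 q1 q2).[x]).
    by rewrite /ode_residual !hornerE hornerMn exprS /=; field.
  by rewrite y_ode // subrr res !mulr0 subr0.
have x0 : u < (u + v) / 2 < v by apply/andP; split; lra.
exists (Phi ((u + v) / 2)) => x ux; have [_ q1x q2x] := nz x ux.
rewrite -(is_derive0_itv_cst Phi'0 ux x0) /Phi !fctE.
by field; rewrite q1x q2x.
Qed.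

Lemma pow_eq_cst_mul_root u v (h Q : R -> R) n C : (0 < n)%N ->
  (forall x, u < x < v -> {for x, continuous h}) ->
  (forall x, u < x < v -> {for x, continuous Q}) ->
  (forall x, u < x < v -> Q x != 0) ->
  (forall x, u < x < v -> h x ^+ n = C * Q x) ->
  exists (sigma : R) (g : R -> R),
    [/\ forall x, u < x < v -> {for x, continuous g},
        forall x, u < x < v -> g x ^+ (2 * n) = Q x ^+ 2 &
        forall x, u < x < v -> h x = sigma * g x].
Proof.
move=> n0 hc Qc Q0 hQ.
have rootK (a : R) : 0 <= a -> (a `^ n%:R^-1) ^+ n = a.
  move=> a0; rewrite -powR_mulrn ?powR_ge0 // -powRrM mulVf ?powRr1 //.
  by rewrite pnatr_eq0 -lt0n.
have [C0|C0] := eqVneq C 0.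
  exists 0, (fun x => `|Q x| `^ n%:R^-1); split => x ux.
  - change {for x, continuous ((fun a => a `^ n%:R^-1) \o (Num.norm \o Q))}.
    apply: continuous_comp; first exact: continuous_comp (Qc x ux) (@norm_continuous _ _ _).
    apply: derivable1_continuous; apply: derivable_powR.
    by rewrite in_itv /= andbT normr_gt0 Q0.
  - by rewrite mulnC exprM rootK // real_normK ?num_real.
  - by move: (hQ x ux); rewrite C0 !mul0r => /eqP; rewrite expf_eq0 n0 => /eqP.
pose c := `|C| `^ n%:R^-1.
have c0 : c != 0 by rewrite /c powR_eq0 normr_eq0 negb_and C0.
exists c, (fun x => h x / c); split => x ux.
- by apply: continuousM; [exact: hc|exact: cst_continuous].
- rewrite expr_div_n mulnC !exprM hQ // rootK // real_normK ?num_real //.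
  by field; rewrite C0.
- by field.
Qed.

End PowerRatio.

Section Equation.
Variable R : realType.
Variables a1 a2 b1 b2 : {poly R}.
Local Notation al := (a1 * b2).
Local Notation be := (a2 * b1).
Local Notation ga := (a2 * b2).
Implicit Types (u v x : R) (f : R -> R).

Lemma admissible_be u v x : admissible a2 b1 b2 u v -> u < x < v -> be.[x] != 0.
Proof. by move=> [_ adm] /adm[a2x b1x _]; rewrite hornerM mulf_neq0. Qed.

Lemma solution_ode u v f : admissible a2 b1 b2 u v -> is_solution a1 a2 b1 b2 u v f ->
  forall x, u < x < v -> is_derive x (1:R) f (derive1 f x) /\
    be.[x] * derive1 f x = ga.[x] + (- al).[x] * f x.
Proof.
move=> [_ adm] sol x ux; have [a2x b1x b2x] := adm x ux; have [f' fE] := sol x ux.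
split; first by rewrite derive1E; apply: derivableP.
rewrite /ratev in fE; rewrite !hornerE.
transitivity (a2.[x] * b2.[x] * (f x * (a1.[x] / a2.[x]) + derive1 f x * (b1.[x] / b2.[x]))
   - a1.[x] * b2.[x] * f x).
  by field; rewrite a2x b2x.
by rewrite fE mulr1; ring.
Qed.

Lemma rational_particular_solution u v f : admissible a2 b1 b2 u v ->
  is_solution a1 a2 b1 b2 u v f -> algebraic_on u v f ->
  exists r1 r2, [/\ coprimep r1 r2, r2 != 0 & ode_residual be al (- ga) r1 r2 = 0].
Proof.
move=> adm sol /algebraic_onE falg.
have f' x (ux : u < x < v) := (solution_ode adm sol ux).1.
have f_ode x (ux : u < x < v) := (solution_ode adm sol ux).2.
have [P [P0 Pf Pmin]] := @ex_size_minimal _ (annihilates u v f) falg.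
have [m szP] : exists m, size P = m.+2.
  by have := annihilator_size_gt1 adm.1 P0 Pf; case: (size P) => [|[|m]] //; exists m.
have := ode_residual_red_top be ga (- al) szP.
rewrite (minimal_ode_deriv_red f' f_ode P0 Pf Pmin) coef0 mul0rn oppr0 opprK => res.
have Pm0 : P`_m.+1 *+ m.+1 != 0.
  rewrite -mulr_natr mulf_neq0 //; first by rewrite -lead_coef_eq0 lead_coefE szP in P0.
  by rewrite -polyC_natr polyC_eq0 pnatr_eq0.
have [r1 [r2 [r12 r20 _ r_sol]]] := ode_residual_coprime Pm0 res.
by exists r1, r2.
Qed.

Section Deviation.
Variables r1 r2 : {poly R}.
Hypotheses (r12 : coprimep r1 r2) (r20 : r2 != 0).
Hypothesis r_sol : ode_residual be al (- ga) r1 r2 = 0.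
Local Notation cdev := (be * r2^`() - al * r2).

Lemma r2_neq0 u v x : admissible a2 b1 b2 u v -> u < x < v -> r2.[x] != 0.
Proof.
by move=> adm ux; apply: contraNN (ode_residual_pole r12 r20 r_sol) (admissible_be adm ux).
Qed.

Definition deviation f x := r2.[x] * f x - r1.[x].

Definition deviation' f x := r2^`().[x] * f x + r2.[x] * derive1 f x - r1^`().[x].

Lemma ratev_deviation u v f x : admissible a2 b1 b2 u v -> u < x < v ->
  f x = ratev r1 r2 x + deviation f x / r2.[x].
Proof.
by move=> adm ux; rewrite /ratev /deviation; field; rewrite (r2_neq0 adm ux).
Qed.

Lemma deviation_ode u v f : admissible a2 b1 b2 u v -> is_solution a1 a2 b1 b2 u v f ->
  forall x, u < x < v -> is_derive x (1:R) (deviation f) (deviation' f x) /\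
    (r2 * be).[x] * deviation' f x = (0 : {poly R}).[x] + cdev.[x] * deviation f x.
Proof.
move=> adm sol x ux; have [f' f_ode] := solution_ode adm sol ux; split.
  have -> : deviation f = horner r2 * f - horner r1 by apply/funext.
  apply: (is_derive_eq (is_deriveB (is_deriveM (is_derive_poly r2 x) f')
    (is_derive_poly r1 x))).
  by rewrite /deviation' /GRing.scale /=; ring.
apply/eqP; rewrite -subr_eq0; apply/eqP.
transitivity (r2.[x] ^+ 2 * (be.[x] * derive1 f x - (ga.[x] + (- al).[x] * f x))
              - (ode_residual be al (- ga) r1 r2).[x]).
  rewrite /ode_residual /deviation /deviation'.
  by rewrite !(horner0, hornerD, hornerN, hornerM, horner_exp); ring.
by rewrite f_ode subrr r_sol horner0 mulr0 subr0.
Qed.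

Lemma deviation_power_rational u v f x1 : admissible a2 b1 b2 u v ->
  is_solution a1 a2 b1 b2 u v f -> algebraic_on u v f ->
  u < x1 < v -> deviation f x1 != 0 ->
  exists k q1 q2, [/\ coprimep q1 q2, q1 != 0, q2 != 0 &
    ode_residual (r2 * be) (- (cdev *+ k.+1)) 0 q1 q2 = 0].
Proof.
move=> adm sol falg ux1 dev_x1.
have dev' x (ux : u < x < v) := (deviation_ode adm sol ux).1.
have dev_ode x (ux : u < x < v) := (deviation_ode adm sol ux).2.
have : \forall t \near x1, u < t < v /\ deviation f t != 0.
  near=> t; split; near: t; first exact: near_itv.
  by apply: cvgr_neq0 dev_x1; apply: derivable1_continuous; case: (dev' x1 ux1).
case/nbhs_ballP => e /= e0 near_x1.
have J t : x1 - e < t < x1 + e -> u < t < v /\ deviation f t != 0.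
  by move=> xt; apply: near_x1; rewrite -ball_normE /= ltr_distlC.
have /algebraic_onE devJ : algebraic_on (x1 - e) (x1 + e) (deviation f).
  exact: algebraic_on_sub (fun t xt => (J t xt).1) (algebraic_on_affine r2 r1 falg).
have J' x (xJ : x1 - e < x < x1 + e) := dev' x (J x xJ).1.
have J_ode x (xJ : x1 - e < x < x1 + e) := dev_ode x (J x xJ).1.
have [P [P0 Pdev Pmin]] :=
  @ex_size_minimal _ (annihilates (x1 - e) (x1 + e) (deviation f)) devJ.
have [n szP] : exists n, size P = n.+2.
  have Je : x1 - e < x1 + e by lra.
  by have := annihilator_size_gt1 Je P0 Pdev; case: (size P) => [|[|n]] //; exists n.
have := ode_residual_red_bottom (r2 * be) cdev szP erefl.
rewrite (minimal_ode_deriv_red J' J_ode P0 Pdev Pmin) coef0 => res.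
have Pn0 : P`_n.+1 != 0 by rewrite -lead_coef_eq0 lead_coefE szP in P0.
have [q1 [q2 [q12 q20 q10 q_sol]]] := ode_residual_coprime Pn0 res.
exists n, q1, q2; split => //; apply: q10.
by apply: (minimal_coef0_neq0 P0 Pdev Pmin) => x /J[].
Unshelve. all: by end_near.
Qed.

Lemma solution_decomposition k q1 q2 u v f : coprimep q1 q2 -> q1 != 0 -> q2 != 0 ->
  ode_residual (r2 * be) (- (cdev *+ k.+1)) 0 q1 q2 = 0 ->
  admissible a2 b1 b2 u v -> is_solution a1 a2 b1 b2 u v f ->
  exists (sigma : R) (g : R -> R),
    (forall x, u < x < v -> {for x, continuous g}) /\
    (forall x, u < x < v -> g x ^+ (2 * k.+1) = ratev (q1 ^+ 2) ((q2 * r2 ^+ k.+1) ^+ 2) x) /\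
    (forall x, u < x < v -> f x = ratev r1 r2 x + sigma * g x).
Proof.
move=> q12 q10 q20 q_sol adm sol.
have r2x x (ux : u < x < v) := r2_neq0 adm ux.
have nz x : u < x < v -> [/\ (r2 * be).[x] != 0, q1.[x] != 0 & q2.[x] != 0].
  move=> ux; have Bx : (r2 * be).[x] != 0.
    by rewrite hornerM mulf_neq0 ?r2x ?(admissible_be adm).
  split=> //; first exact: contraNN (ode_residual_root q12 q10 q_sol) Bx.
  exact: contraNN (ode_residual_pole q12 q20 q_sol) Bx.
have [C devC] : exists C, forall x, u < x < v -> deviation f x ^+ k.+1 = C * q1.[x] / q2.[x].
  apply: (ode_power_ratio_cst adm.1 _ _ q_sol nz) => x ux.
    exact: (deviation_ode adm sol ux).1.
  by rewrite (deviation_ode adm sol ux).2 horner0 add0r.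
pose Q := ratev q1 (q2 * r2 ^+ k.+1).
have Qx0 x : u < x < v -> (q2 * r2 ^+ k.+1).[x] != 0.
  by move=> ux; have [_ _ q2x] := nz x ux; rewrite hornerM horner_exp mulf_neq0 ?expf_neq0 ?r2x.
have hc x : u < x < v -> {for x, continuous (fun t => deviation f t / r2.[t])}.
  move=> ux; apply: derivable1_continuous.
  have -> : (fun t => deviation f t / r2.[t]) = deviation f * (fun t => (r2.[t])^-1).
    by apply/funext.
  apply: derivableM; first by case: (deviation_ode adm sol ux).1.
  by apply: derivableV; [exact: r2x|exact: derivable_horner].
have Q0 x : u < x < v -> Q x != 0.
  by move=> ux; have [_ q1x _] := nz x ux; rewrite mulf_neq0 ?invr_eq0 ?Qx0.
have hQ x : u < x < v -> (deviation f x / r2.[x]) ^+ k.+1 = C * Q x.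
  move=> ux; have [_ q1x q2x] := nz x ux.
  rewrite expr_div_n devC // /Q /ratev hornerM horner_exp.
  by field; rewrite q2x expf_neq0 ?r2x.
have Qc x : u < x < v -> {for x, continuous Q}.
  by move=> ux; exact: ratev_continuous (Qx0 x ux).
have [sigma [g [gc gQ hg]]] := pow_eq_cst_mul_root (ltn0Sn k) hc Qc Q0 hQ.
exists sigma, g; split; [|split] => x ux; first exact: gc.
  by rewrite gQ // /Q /ratev expr_div_n !horner_exp.
by rewrite -hg // (ratev_deviation f adm ux).
Qed.

End Deviation.

End Equation.

Theorem lemma1 (R : realType) (a1 a2 b1 b2 : {poly R})
  (ha2 : a2 != 0) (hb2 : b2 != 0) (hB : b1 != 0)
  (halg : forall (u v : R) (f : R -> R), admissible a2 b1 b2 u v ->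
            is_solution a1 a2 b1 b2 u v f -> algebraic_on u v f) :
  exists N : nat, (0 < N)%N /\
  exists r1 r2 q1 q2 : {poly R}, r2 != 0 /\ q2 != 0 /\
    forall (u v : R) (f : R -> R), admissible a2 b1 b2 u v ->
      is_solution a1 a2 b1 b2 u v f ->
      exists (sigma : R) (g : R -> R),
        (forall x, u < x < v -> {for x, continuous g}) /\
        (forall x, u < x < v -> g x ^+ N = ratev q1 q2 x) /\
        (forall x, u < x < v -> f x = ratev r1 r2 x + sigma * g x).
Proof.
have [[u0 [v0 [f0 [adm0 sol0]]]]|nosol] := pselect (exists u v f,
    admissible a2 b1 b2 u v /\ is_solution a1 a2 b1 b2 u v f); last first.
  exists 1%N; split => //; exists 0, 1, 1, 1; split; last split; rewrite ?oner_neq0 //.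
  by move=> u v f adm sol; case: nosol; exists u, v, f.
have [r1 [r2 [r12 r20 r_sol]]] := rational_particular_solution adm0 sol0 (halg _ _ _ adm0 sol0).
have [[u [v [f [x [adm sol ux dev0]]]]]|dev0] := pselect (exists u v f x,
    [/\ admissible a2 b1 b2 u v, is_solution a1 a2 b1 b2 u v f, u < x < v &
        deviation r1 r2 f x != 0]).
  have [k [q1 [q2 [q12 q10 q20 q_sol]]]] :=
    deviation_power_rational r_sol adm sol (halg _ _ _ adm sol) ux dev0.
  exists (2 * k.+1)%N; split; first by rewrite muln_gt0.
  exists r1, r2, (q1 ^+ 2), ((q2 * r2 ^+ k.+1) ^+ 2).
  split; last split; first exact: r20.
    by rewrite expf_neq0 // mulf_neq0 // expf_neq0.
  by move=> u' v' f'; apply: solution_decomposition.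
exists 1%N; split => //; exists r1, r2, 1, 1; split; last split; rewrite ?oner_neq0 //.
move=> u v f adm sol; exists 0, (fun _ => 1); split; [|split] => x ux.
- exact: cst_continuous.
- by rewrite expr1 /ratev hornerC divr1.
- have /eqP dev0x : deviation r1 r2 f x == 0.
    by apply: contra_notT dev0 => devx; exists u, v, f, x.
  by rewrite (ratev_deviation r12 r20 r_sol f adm ux) dev0x !mul0r addr0.
Qed.
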